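(* Let $G=(V,E)$ be a connected graph on $n$ vertices with minimum degree $\delta(G)\geq 3$. Then $F(G)\geq \lfloor n/2\rfloor$. Moreover, if $G$ contains a cycle of even length, then $F(G)\geq \lceil n/2\rceil$.
   Context: All graphs are finite and simple. Given a graph $G=(V,E)$ and a set $S\subseteq V$ of filled vertices, the color change rule is: if a filled vertex $v$ has exactly one unfilled neighbor $w$, then $w$ becomes filled. The derived set of $S$ is the set of filled vertices obtained after applying the rule until no further application is possible. $S$ is a zero forcing set if its derived set is $V$; otherwise $S$ is a failed zero forcing set. The failed zero forcing number $F(G)$ is the maximum size of a failed zero forcing set of $G$. *)

From mathcomp Require Import all_boot.
Set Implicit Arguments. Unset Strict Implicit. Unset Printing Implicit Defensive.

Definition simple_graph (T : finType) (e : rel T) : Prop :=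
  symmetric e /\ irreflexive e.

Definition nbhd (T : finType) (e : rel T) (v : T) : {set T} := [set u | e v u].

(* one (parallel) application of the color change rule to all possible vertices *)
Definition force_step (T : finType) (e : rel T) (S : {set T}) : {set T} :=
  S :|: [set w | [exists v in S, nbhd e v :\: S == [set w]]].

(* derived set: iterate until stabilisation (#|T| rounds suffice) *)
Definition derived_set (T : finType) (e : rel T) (S : {set T}) : {set T} :=
  iter #|T| (force_step e) S.

Definition zero_forcing_set (T : finType) (e : rel T) (S : {set T}) : bool :=
  derived_set e S == [set: T].

Definition failed_zero_forcing_set (T : finType) (e : rel T) (S : {set T}) : bool :=
  ~~ zero_forcing_set e S.

(* F(G): maximum size of a failed zero forcing set (0 if none exists) *)
Definition failed_zf_number (T : finType) (e : rel T) : nat :=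
  \max_(S : {set T} | failed_zero_forcing_set e S) #|S|.

Definition connected_graph (T : finType) (e : rel T) : Prop :=
  forall x y : T, connect e x y.

Definition min_degree_ge (T : finType) (e : rel T) (d : nat) : Prop :=
  forall v : T, d <= #|nbhd e v|.

Definition has_even_cycle (T : finType) (e : rel T) : Prop :=
  exists c : seq T, [/\ uniq c, cycle e c, 3 <= size c & ~~ odd (size c)].

(* Take a maximum cut (A, ~: A).  Moving a vertex to the other side cannot
   enlarge the cut, so every vertex has at least half of its neighbours, hence
   (degree >= 3) at least two, across the cut.  Therefore no filled vertex of
   the larger side A has exactly one unfilled neighbour: A is stalled, and it
   is a failed zero forcing set of size at least ceil(n/2). *)
From mathcomp Require Import all_boot.
From mathcomp Require Import zify.
Set Implicit Arguments. Unset Strict Implicit.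

Section Stalled.
Variables (T : finType) (e : rel T).

Lemma force_step_id (S : {set T}) :
  (forall x, x \in S -> #|nbhd e x :\: S| != 1) -> force_step e S = S.
Proof.
move=> stalled; apply/setUidPl/subsetP => w.
rewrite inE => /existsP [v /andP [vS /eqP unfilled]].
by have := stalled v vS; rewrite unfilled cards1.
Qed.

Lemma derived_set_id (S : {set T}) :
  force_step e S = S -> derived_set e S = S.
Proof. by move=> fixS; rewrite /derived_set; elim: #|T| => //= n ->. Qed.

Lemma failed_of_force_step_id (S : {set T}) :
  force_step e S = S -> S != [set: T] -> failed_zero_forcing_set e S.
Proof.
by move=> fixS; rewrite /failed_zero_forcing_set /zero_forcing_set derived_set_id.
Qed.

End Stalled.

Section MaxCut.
Variables (T : finType) (e : rel T).
Hypothesis esym : symmetric e.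
Hypothesis eirr : irreflexive e.

Definition crossing (A : {set T}) x y : bool := e x y && ((x \in A) != (y \in A)).

(* Each crossing edge is counted twice, once in each direction. *)
Definition cut_size (A : {set T}) : nat := \sum_x \sum_y crossing A x y.

Definition cross_deg (A : {set T}) v : nat := \sum_y crossing A v y.

Definition cut_size_off (A : {set T}) v : nat :=
  \sum_(x | x != v) \sum_(y | y != v) crossing A x y.

Definition toggle (A : {set T}) v : {set T} := [set x | (x \in A) != (x == v)].

Lemma crossingC A x y : crossing A x y = crossing A y x.
Proof. by rewrite /crossing esym eq_sym. Qed.

Lemma crossing_setC (A : {set T}) x y : crossing (~: A) x y = crossing A x y.
Proof. by rewrite /crossing !inE; case: (x \in A); case: (y \in A). Qed.

Lemma cut_size_setC A : cut_size (~: A) = cut_size A.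
Proof. by apply: eq_bigr => x _; apply: eq_bigr => y _; rewrite crossing_setC. Qed.

Lemma cut_size_split A v : cut_size A = 2 * cross_deg A v + cut_size_off A v.
Proof.
rewrite /cut_size (bigD1 v) //=.
have -> : \sum_(x | x != v) \sum_y crossing A x y =
    \sum_(x | x != v) (crossing A x v + \sum_(y | y != v) crossing A x y).
  by apply: eq_bigr => x _; rewrite (bigD1 v).
rewrite big_split /= -/(cross_deg A v).
have -> : \sum_(x | x != v) crossing A x v = cross_deg A v.
  rewrite /cross_deg [RHS](bigD1 v) //= {2}/crossing eirr add0n.
  by apply: eq_bigr => x _; rewrite crossingC.
by rewrite /cut_size_off addnA mul2n addnn.
Qed.

Lemma cut_size_off_toggle A v : cut_size_off (toggle A v) v = cut_size_off A v.
Proof.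
apply: eq_bigr => x xv; apply: eq_bigr => y yv.
rewrite /crossing !inE (negbTE xv) (negbTE yv).
by case: (x \in A); case: (y \in A).
Qed.

Lemma cross_deg_toggle A v :
  cross_deg A v + cross_deg (toggle A v) v = #|nbhd e v|.
Proof.
rewrite /cross_deg -big_split -sum1_card [RHS]big_mkcond /=.
apply: eq_bigr => y _; rewrite /nbhd /crossing !inE eqxx.
have [->|_] := eqVneq y v; first by rewrite eirr.
by case: (e v y); case: (v \in A); case: (y \in A).
Qed.

Lemma cross_deg_setD (A : {set T}) x : x \in A -> cross_deg A x = #|nbhd e x :\: A|.
Proof.
move=> xA; rewrite /cross_deg -sum1_card [RHS]big_mkcond /=.
by apply: eq_bigr => y _; rewrite /crossing !inE xA; case: (e x y); case: (y \in A).
Qed.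

Section Maximum.
Variable A : {set T}.
Hypothesis Amax : forall B, cut_size B <= cut_size A.

Lemma max_cut_cross_deg v : #|nbhd e v| <= 2 * cross_deg A v.
Proof.
have := Amax (toggle A v).
rewrite !(cut_size_split _ v) cut_size_off_toggle -(cross_deg_toggle A v).
lia.
Qed.

Lemma max_cut_unfilled x :
  3 <= #|nbhd e x| -> x \in A -> 2 <= #|nbhd e x :\: A|.
Proof.
by move=> deg3 xA; rewrite -cross_deg_setD //; have := max_cut_cross_deg x; lia.
Qed.

End Maximum.

Lemma max_cut_failed (A : {set T}) :
  (forall B, cut_size B <= cut_size A) -> (forall v, 3 <= #|nbhd e v|) ->
  A != set0 -> failed_zero_forcing_set e A.
Proof.
move=> Amax deg3 /set0Pn [x xA].
have unfilled y : y \in A -> 2 <= #|nbhd e y :\: A|.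
  exact: max_cut_unfilled.
apply: failed_of_force_step_id.
  by apply: force_step_id => y /unfilled; case: #|_| => [|[]].
have /card_gt0P [y] : 0 < #|nbhd e x :\: A| by apply: leq_trans (unfilled x xA).
by rewrite !inE => /andP [yA _]; apply/eqP => AT; rewrite AT inE in yA.
Qed.

End MaxCut.

Theorem theorem1 (T : finType) (e : rel T) :
  simple_graph e -> connected_graph e -> min_degree_ge e 3 ->
  #|T| ./2 <= failed_zf_number e /\
  (has_even_cycle e -> uphalf #|T| <= failed_zf_number e).
Proof.
move=> [esym eirr] _ deg3.
suff ceil_bound : uphalf #|T| <= failed_zf_number e.
  by split=> [|_] //; apply: leq_trans ceil_bound; rewrite uphalf_half; lia.
have [n0 | n_gt0] := posnP #|T|; first by rewrite n0.
have [A _ Amax] := @arg_maxnP _ (set0 : {set T}) predT (cut_size e) isT.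
have [S Smax S_large] : exists2 S, (forall B, cut_size e B <= cut_size e S)
    & uphalf #|T| <= #|S|.
  have := cardsC A; have := odd_double_half #|T|; rewrite uphalf_half.
  case: (leqP #|~: A| #|A|) => side_le; [exists A | exists (~: A)];
    by [move=> B; rewrite ?cut_size_setC; apply: Amax | lia].
have S_ne0 : S != set0 by rewrite -card_gt0; move: S_large; rewrite uphalf_half; lia.
apply: leq_trans S_large (leq_bigmax_cond _ _).
exact: max_cut_failed.
Qed.
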